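(* Let $n\ge 1$, $k\ge 2$, $m\ge 1$ be integers and let $P_* \in \mathrm{Hom}(\Gamma_{n,k},\mathcal{D}(\mathbb{R}^m,0))$ satisfy $D^{(1)}_0P_*^a = k^{-1}I$ and $D^{(1)}_0P_*^{b_i}=I$ for all $i=1,\dots,n$. Then there exists a $C^1_{loc}$-neighborhood $\mathcal{U}$ of $P_*$ in $\mathrm{Hom}(\Gamma_{n,k},\mathcal{D}(\mathbb{R}^m,0))$ such that $D^{(1)}_0P^{b_i} = I$ for all $P\in\mathcal{U}$ and all $i=1,\dots,n$.
   Context: $\Gamma_{n,k} = \langle a, b_1,\dots,b_n \mid a b_i a^{-1} = b_i^k,\ b_i b_j = b_j b_i\rangle$. $\mathcal{D}(\mathbb{R}^m,0)$ is the group of germs at $0$ of local diffeomorphisms of $\mathbb{R}^m$ fixing $0$; $D^{(1)}_0F$ is the derivative at $0$. The $C^1_{loc}$-topology on $\mathcal{D}(\mathbb{R}^m,0)$ is given by the pseudo-distance $d(F,G)=\|D^{(1)}_0F-D^{(1)}_0G\|$ (operator norm), and $\mathrm{Hom}(\Gamma_{n,k},\mathcal{D}(\mathbb{R}^m,0))$ carries the induced product topology (convergence of $P^\gamma$ for each $\gamma$). We write $P^\gamma=P(\gamma)$. *)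

From HB Require Import structures.
From mathcomp Require Import all_boot all_order all_algebra.
From mathcomp Require Import all_classical all_reals all_analysis.
Set Implicit Arguments. Unset Strict Implicit. Unset Printing Implicit Defensive.
Import Order.TTheory GRing.Theory Num.Theory.
Import numFieldNormedType.Exports.
Local Open Scope ring_scope.

(* Generators of Gamma_{n,k}: None = a, Some i = b_(i+1). *)
Definition gen (n : nat) := option 'I_n.
(* A word in the generators and their inverses: (g, true) = g^{-1}. *)
Definition word (n : nat) := seq (gen n * bool).

Section Germs.
Variables (R : realType) (m : nat).
Local Notation V := 'rV[R]_m.

Definition germ_eq (f g : V -> V) : Prop := \forall x \near (0 : V), f x = g x.

(* (f, g) represent a germ at 0 of a local diffeomorphism fixing 0, and its
   inverse germ: both fix 0, are differentiable near 0, and are mutually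
   inverse near 0. *)
Definition loc_diffeo_pair (f g : V -> V) : Prop :=
  f 0 = 0 /\ g 0 = 0 /\
  (\forall x \near (0 : V), differentiable f x) /\
  (\forall x \near (0 : V), differentiable g x) /\
  (\forall x \near (0 : V), g (f x) = x) /\
  (\forall x \near (0 : V), f (g x) = x).

(* A homomorphism Gamma_{n,k} -> D(R^m,0), given by representatives F g of
   the germs P^g of the generators and representatives G g of their inverses.
   Relations: a b_i a^{-1} = b_i^k  (equivalently a b_i = b_i^k a)
   and b_i b_j = b_j b_i, as germs at 0. *)
Definition is_hom (n k : nat) (F G : gen n -> V -> V) : Prop :=
  (forall g, loc_diffeo_pair (F g) (G g)) /\
  (forall i, germ_eq (F None \o F (Some i))
                     (fun x => iter k (F (Some i)) (F None x))) /\
  (forall i j, germ_eq (F (Some i) \o F (Some j)) (F (Some j) \o F (Some i))).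

Definition eval_word (n : nat) (F G : gen n -> V -> V) (w : word n) : V -> V :=
  foldr (fun (p : gen n * bool) acc => (if p.2 then G p.1 else F p.1) \o acc)
        id w.

End Germs.

From HB Require Import structures.
From mathcomp Require Import all_boot all_order all_algebra.
From mathcomp Require Import all_classical all_reals all_analysis.
From mathcomp Require Import ring lra.
Set Implicit Arguments. Unset Strict Implicit. Unset Printing Implicit Defensive.
Import Order.TTheory GRing.Theory Num.Theory.
Import numFieldNormedType.Exports.
Local Open Scope ring_scope.

(* Differentiating the relations at the common fixed point 0 turns them into
   relations between linear maps: A := D_0 P^a is close to 1/k with inverse
   A' close to k, B := D_0 P^(b_i) is close to the identity, and B^k = A B A'.
   If |B - I| <= M then B^k - I = k (B - I) + O(M^2) while A (B - I) A' has
   size about M, so k |B - I| <= (1 + small) M + O(M^2) <= (3/4) k M.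
   Iterating, |B - I| <= (3/4)^j eps for every j, hence B = I. *)

Section FixedPointDifferentials.
Variables (R : realType) (V : normedModType R).
Implicit Types (f g : V -> V) (a v : V).

Lemma near_eq_diff f g a v : differentiable f a -> differentiable g a ->
  (\forall x \near a, f x = g x) -> 'd f a v = 'd g a v.
Proof. by move=> df dg fg; rewrite -!deriveE //; apply: near_eq_derive. Qed.

Lemma diff_id_apply a v : 'd (@id V) a v = v.
Proof. by rewrite diff_val. Qed.

Lemma differentiable_comp_fix f g a : g a = a ->
  differentiable g a -> differentiable f a -> differentiable (f \o g) a.
Proof. by move=> ga dg df; apply: differentiable_comp; rewrite ?ga. Qed.

Lemma diff_comp_fix f g a v : g a = a ->
  differentiable g a -> differentiable f a -> 'd (f \o g) a v = 'd f a ('d g a v).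
Proof. by move=> ga dg df; rewrite diff_comp ?ga. Qed.

Lemma iter_fix f a j : f a = a -> iter j f a = a.
Proof. by move=> fa; elim: j => //= j ->. Qed.

Lemma differentiable_iter_fix f a j : f a = a -> differentiable f a ->
  differentiable (iter j f) a.
Proof.
move=> fa df; elim: j => [|j IH]; first exact: ex_diff.
by apply: differentiable_comp_fix IH df; apply: iter_fix.
Qed.

Lemma diff_iter_fix f a j v : f a = a -> differentiable f a ->
  'd (iter j f) a v = iter j ('d f a) v.
Proof.
move=> fa df; elim: j v => [|j IH] v; first exact: diff_id_apply.
rewrite /= -IH; apply: (diff_comp_fix _ (iter_fix _ fa)) => //.
exact: differentiable_iter_fix.
Qed.
End FixedPointDifferentials.

Section GermDifferentials.
Variables (R : realType) (m : nat).
Local Notation V := 'rV[R]_m.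
Implicit Types (f g : V -> V).

Lemma loc_diffeo_pair_sym f g : loc_diffeo_pair f g -> loc_diffeo_pair g f.
Proof. by case=> f0 [g0 [df [dg [gf fg]]]]; do !split. Qed.

Lemma loc_diffeo_pair_diffK f g v : loc_diffeo_pair f g -> 'd f 0 ('d g 0 v) = v.
Proof.
case=> [_ [g0 [/nbhs_singleton df [/nbhs_singleton dg [_ fg]]]]].
rewrite -(diff_comp_fix _ g0) // -[RHS](diff_id_apply 0).
apply: near_eq_diff fg => //; first exact: differentiable_comp_fix.
Qed.

Lemma loc_diffeo_pair_diff_scale f g (c : R) : loc_diffeo_pair f g -> c != 0 ->
  (forall v, 'd f 0 v = c^-1 *: v) -> forall v, 'd g 0 v = c *: v.
Proof.
move=> fg c0 hf v.
have hcv : 'd f 0 (c *: v) = v by rewrite hf scalerA mulVf ?scale1r.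
rewrite -[in LHS]hcv; exact: loc_diffeo_pair_diffK (loc_diffeo_pair_sym fg).
Qed.

Lemma germ_eq_conj_diff (k : nat) (a b : V -> V) v : a 0 = 0 -> b 0 = 0 ->
  differentiable a 0 -> differentiable b 0 ->
  germ_eq (a \o b) (iter k b \o a) ->
  'd a 0 ('d b 0 v) = iter k ('d b 0) ('d a 0 v).
Proof.
move=> a0 b0 da db hab.
have dbk := differentiable_iter_fix k b0 db.
rewrite -(diff_comp_fix v b0 db da) -(diff_iter_fix k _ b0 db).
transitivity ('d (iter k b \o a) 0 v); last exact: diff_comp_fix.
apply: near_eq_diff hab; exact: differentiable_comp_fix.
Qed.

Lemma is_hom_diff_conj n k (F G : gen n -> V -> V) i v : is_hom k F G ->
  'd (F None) 0 ('d (F (Some i)) 0 v) = iter k ('d (F (Some i)) 0) ('d (F None) 0 v).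
Proof.
case=> hloc [hrel _].
have [a0 [_ [/nbhs_singleton da _]]] := hloc None.
have [b0 [_ [/nbhs_singleton db _]]] := hloc (Some i).
exact: germ_eq_conj_diff a0 b0 da db (hrel i).
Qed.
End GermDifferentials.

Lemma le0_geometric_bound (R : realType) (x c q : R) : `|q| < 1 ->
  (forall j, x <= c * q ^+ j) -> x <= 0.
Proof.
move=> q1 hx; rewrite leNgt; apply/negP => x0.
have [N _ hN] := cvgr_lt _ (cvg_geometric c q1) _ x0.
by have := hN N (leqnn N); rewrite /geometric /= ltNge hx.
Qed.

Section IterNearIdentity.
Variables (R : realType) (V : normedModType R).
Variables (B : {linear V -> V}) (M : R).
Hypotheses (M0 : 0 <= M) (M1 : M <= 1) (hB : forall v, `|B v - v| <= M * `|v|).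

Lemma iter_sub_le j v : `|iter j B v - v| <= (2 ^+ j - 1) * M * `|v|.
Proof.
elim: j => [|j IH]; first by rewrite /= subrr normr0 expr0 subrr !mul0r.
set x := iter j B v.
have -> : iter j.+1 B v - v = (B x - x) + (x - v) by rewrite /= addrA subrK.
have hx : `|x| <= `|v| + `|x - v| by rewrite -[x in `|x|](subrK v) addrC ler_normD.
have hMx : M * `|x| <= M * (`|v| + `|x - v|) by apply: ler_wpM2l.
have hMxv : M * `|x - v| <= `|x - v| by rewrite ler_piMl.
have hp : 0 <= (2 ^+ j - 1) * M * `|v|.
  by rewrite !mulr_ge0 // subr_ge0 exprn_ege1 // ler1n.
apply: (le_trans (ler_normD _ _)); have := hB x; rewrite exprS; nra.
Qed.

Lemma iter_sub_lin_le j v :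
  `|iter j B v - v - j%:R *: (B v - v)| <= (j%:R * 2 ^+ j) * M ^+ 2 * `|v|.
Proof.
elim: j => [|j IH]; first by rewrite /= subrr scale0r subr0 normr0 !mul0r.
set x := iter j B v.
have -> : iter j.+1 B v - v - j.+1%:R *: (B v - v) =
    (B (x - v) - (x - v)) + (x - v - j%:R *: (B v - v)).
  rewrite iterS -/x [B (x - v)]raddfB -[j.+1]addn1 natrD scalerDl scale1r.
  set a := B x; set b := B v; set e := j%:R *: (b - v).
  rewrite [RHS]addrA subrK opprD opprB addrCA [a - v + _]addrA subrK addrC //.
apply: (le_trans (ler_normD _ _)).
have h1 : `|B (x - v) - (x - v)| <= M * ((2 ^+ j - 1) * M * `|v|).
  by apply: (le_trans (hB _)); apply: ler_wpM2l => //; apply: iter_sub_le.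
have p0 : 0 <= M ^+ 2 * `|v| by rewrite mulr_ge0 // exprn_ge0.
have p2 : 0 <= 2 ^+ j * M ^+ 2 * `|v| by rewrite !mulr_ge0 // exprn_ge0.
have p1 : 0 <= j%:R * 2 ^+ j * M ^+ 2 * `|v| by rewrite !mulr_ge0 // exprn_ge0.
have -> : (j.+1)%:R = (j%:R + 1 : R) by rewrite -natr1.
move: IH h1 p0 p1 p2; rewrite -/x !expr2 exprS; nra.
Qed.
End IterNearIdentity.

Lemma norm_le_near_scale (R : realType) (V : normedModType R) (f : V -> V)
    (c e : R) : 0 <= c -> (forall v, `|f v - c *: v| <= e * `|v|) -> forall v, `|f v| <= (c + e) * `|v|.
Proof.
move=> c0 hf v; rewrite -[f v](subrK (c *: v)); apply: (le_trans (ler_normD _ _)).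
by rewrite normrZ ger0_norm // mulrDl addrC lerD2l.
Qed.

Section NearScalarConjugation.
Variables (R : realType) (V : normedModType R) (k : nat).
Variables (A A' B : {linear V -> V}) (eps : R).
Local Notation K := (k%:R : R).
Hypotheses (k_ge2 : (2 <= k)%N) (eps_gt0 : 0 < eps).
Hypothesis eps_small : eps * (2 * (K + 2 + K * 2 ^+ k)) <= 1.
Hypotheses (hA : forall v, `|A v - K^-1 *: v| <= eps * `|v|)
  (hA' : forall v, `|A' v - K *: v| <= eps * `|v|)
  (hB : forall v, `|B v - v| <= eps * `|v|).
Hypotheses (AA' : forall v, A (A' v) = v) (AB : forall v, A (B v) = iter k B (A v)).

Lemma iter_conj_sub v : iter k B v - v = A (B (A' v) - A' v).
Proof. by have := AB (A' v); rewrite AA' => <-; rewrite linearB AA'. Qed.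

Lemma eps_le_quarter : eps <= 4^-1.
Proof.
have K2 : 2 <= K by rewrite (ler_nat R 2 k).
have p0 : 0 <= K * 2 ^+ k by rewrite mulr_ge0 ?exprn_ge0 // ler0n.
have : eps * 4 <= eps * (2 * (K + 2 + K * 2 ^+ k)) by rewrite ler_wpM2l ?ltW //; lra.
move/le_trans/(_ eps_small); lra.
Qed.

Lemma contraction_constant (M : R) : 0 <= M -> M <= eps ->
  (K^-1 + eps) * (K + eps) + K * 2 ^+ k * M <= 3/4 * K.
Proof.
move=> M0 Meps.
have K2 : 2 <= K by rewrite (ler_nat R 2 k).
have p0 : 0 <= K * 2 ^+ k by rewrite mulr_ge0 ?exprn_ge0 // ler0n.
have hK : K^-1 * K = 1 by rewrite mulVf // gt_eqF //; lra.
have Ki : K^-1 <= 2^-1 by rewrite lef_pV2 ?posrE //; lra.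
have : K * 2 ^+ k * M <= K * 2 ^+ k * eps by rewrite ler_wpM2l.
have : K^-1 * eps <= 2^-1 * eps by rewrite ler_wpM2r // ltW.
have e4 := eps_le_quarter.
have : eps * eps <= 4^-1 * eps by rewrite ler_wpM2r // ltW.
move: eps_small; rewrite !mulrDr !mulrDl mulrA hK; lra.
Qed.

Lemma near_id_contract (M : R) : 0 <= M -> M <= eps ->
  (forall v, `|B v - v| <= M * `|v|) -> forall v, `|B v - v| <= 3/4 * M * `|v|.
Proof.
move=> M0 Meps hM v.
have K0 : 0 < K by rewrite ltr0n; case: k k_ge2.
have e1 : eps <= 1 by have := eps_le_quarter; lra.
have Ki0 : 0 <= K^-1 by rewrite invr_ge0 ltW.
have hAn := norm_le_near_scale Ki0 hA.
have hA'n := norm_le_near_scale (ltW K0) hA'.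
have hconj : `|iter k B v - v| <= (K^-1 + eps) * (K + eps) * M * `|v|.
  rewrite iter_conj_sub; apply: (le_trans (hAn _)).
  rewrite -!mulrA; apply: ler_wpM2l; first by rewrite addr_ge0 // ltW.
  by apply: (le_trans (hM _)); rewrite mulrCA; apply: ler_wpM2l => //; apply: hA'n.
have hlin := iter_sub_lin_le M0 (le_trans Meps e1) hM k v.
set w := B v - v in hlin *; set y := iter k B v - v in hconj hlin *.
have hKw : `|K *: w| <= `|y| + `|y - K *: w|.
  by have := ler_normB y (y - K *: w); rewrite opprB addrC subrK.
rewrite normrZ gtr0_norm // in hKw.
have hc := contraction_constant M0 Meps.
have Mv : 0 <= M * `|v| by rewrite mulr_ge0.
rewrite -(ler_pM2l K0); apply: (le_trans hKw); apply: le_trans (lerD hconj hlin) _.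
move: hc Mv; rewrite expr2; nra.
Qed.

Lemma near_id_geometric j v : `|B v - v| <= eps * (3/4) ^+ j * `|v|.
Proof.
elim: j v => [|j IH] v; first by rewrite expr0 mulr1.
have q0 : 0 <= (3/4 : R) ^+ j by rewrite exprn_ge0 //; lra.
have q1 : (3/4 : R) ^+ j <= 1 by rewrite exprn_ile1 //; lra.
rewrite exprS mulrCA; apply: near_id_contract IH v; first by rewrite mulr_ge0 // ltW.
by rewrite ler_piMr // ltW.
Qed.

Lemma near_id_conj_eq v : B v = v.
Proof.
apply/eqP; rewrite -subr_eq0 -normr_eq0 eq_le normr_ge0 andbT.
apply: (@le0_geometric_bound _ _ (eps * `|v|) (3/4)); first by rewrite ger0_norm; lra.
by move=> j; rewrite mulrAC; apply: near_id_geometric.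
Qed.
End NearScalarConjugation.

Definition generator_words (n : nat) : seq (word n) :=
  [:: (None, false)] :: [:: (None, true)] :: [seq [:: (Some i, false)] | i <- enum 'I_n].

Lemma mem_generator_words n (g : gen n) (b : bool) :
  (g == None) || ~~ b -> [:: (g, b)] \in generator_words n.
Proof. by case: g b => [i|] [] //= _; rewrite !inE ?eqxx ?map_f ?mem_enum ?orbT. Qed.

Lemma eval_word1 (R : realType) (n m : nat) (F G : gen n -> 'rV[R]_m -> 'rV[R]_m)
    (g : gen n) (b : bool) :
  eval_word F G [:: (g, b)] = if b then G g else F g.
Proof. by []. Qed.

Lemma generator_words_diff_near (R : realType) (n m : nat)
    (F G Fs Gs : gen n -> 'rV[R]_m -> 'rV[R]_m) (eps : R) :
  (forall w, w \in generator_words n -> forall v : 'rV[R]_m,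
     `|'d (eval_word F G w) 0 v - 'd (eval_word Fs Gs w) 0 v| <= eps * `|v|) ->
  forall (g : gen n) (b : bool), (g == None) || ~~ b -> forall v : 'rV[R]_m,
  `|'d (if b then G g else F g) 0 v - 'd (if b then Gs g else Fs g) 0 v| <= eps * `|v|.
Proof.
move=> hW g b gb v; have := hW _ (mem_generator_words gb) v.
by rewrite !eval_word1.
Qed.

Theorem lemma2p2 (R : realType) (n k m : nat)
  (Hn : (1 <= n)%N) (Hk : (2 <= k)%N) (Hm : (1 <= m)%N)
  (Fs Gs : gen n -> 'rV[R]_m -> 'rV[R]_m) :
  is_hom k Fs Gs ->
  (forall v : 'rV[R]_m, 'd (Fs None) 0 v = k%:R^-1 *: v) ->
  (forall (i : 'I_n) (v : 'rV[R]_m), 'd (Fs (Some i)) 0 v = v) ->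
  exists (W : seq (word n)) (eps : R), 0 < eps /\
    forall F G : gen n -> 'rV[R]_m -> 'rV[R]_m,
      is_hom k F G ->
      (forall w, w \in W -> forall v : 'rV[R]_m,
          `|'d (eval_word F G w) 0 v - 'd (eval_word Fs Gs w) 0 v| <= eps * `|v|) ->
      forall (i : 'I_n) (v : 'rV[R]_m), 'd (F (Some i)) 0 v = v.
Proof.
move=> [hlocs _] hFa hFb.
have K0 : (k%:R : R) != 0 by rewrite pnatr_eq0 -lt0n (ltn_trans _ Hk).
have hGa := loc_diffeo_pair_diff_scale (hlocs None) K0 hFa.
pose c : R := 2 * (k%:R + 2 + k%:R * 2 ^+ k).
have c0 : 0 < c by rewrite /c mulr_gt0 // ltr_wpDr ?mulr_ge0 ?exprn_ge0 // ltr_wpDl.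
exists (generator_words n), c^-1; split; first by rewrite invr_gt0.
move=> F G hFG hW i.
have hd := generator_words_diff_near hW.
apply: (near_id_conj_eq (A := 'd (F None) 0) (A' := 'd (G None) 0) (eps := c^-1) Hk).
- by rewrite invr_gt0.
- by rewrite mulVf // gt_eqF.
- by move=> v; rewrite -hFa; apply: (hd None false).
- by move=> v; rewrite -hGa; apply: (hd None true).
- by move=> v; rewrite -[X in _ - X](hFb i v); apply: (hd (Some i) false).
- by move=> v; case: hFG => hloc _; apply: loc_diffeo_pair_diffK (hloc None).
- by move=> v; apply: is_hom_diff_conj hFG.
Qed.
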